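(* For $\rho \in [-1,1]$ define $C_\rho:[0,1]^2\to[0,1]$ by: if $u \in \{0,1\}$ or $v\in\{0,1\}$, $C_\rho(u,v)=uv$; and for $u,v\in(0,1)$, $$C_\rho(u,v) = \begin{cases} W(u,v) & \text{if } \rho \le \underline{\rho}_{uv},\\ M(u,v) & \text{if } \rho \ge \overline{\rho}_{uv},\\ uv + \rho\sqrt{u(1-u)v(1-v)} & \text{otherwise},\end{cases}$$ where $W(u,v)=\max(u+v-1,0)$, $M(u,v)=\min(u,v)$, $\underline{\rho}_{uv} = \frac{\max(u+v-1,0)-uv}{\sqrt{u(1-u)v(1-v)}}$ and $\overline{\rho}_{uv} = \frac{\min(u,v)-uv}{\sqrt{u(1-u)v(1-v)}}$. Then for every $\rho\in[-1,1]$, $C_\rho$ is a bivariate copula, i.e. (i) $C_\rho(0,v)=C_\rho(u,0)=0$, (ii) $C_\rho(u,1)=u$ and $C_\rho(1,v)=v$, and (iii) $C_\rho(u_2,v_2)-C_\rho(u_2,v_1)-C_\rho(u_1,v_2)+C_\rho(u_1,v_1)\ge 0$ for all $0\le u_1\le u_2\le 1$, $0\le v_1\le v_2\le1$. Moreover $C_{-1}=W$, $C_0(u,v)=uv$ and $C_1=M$ on $[0,1]^2$.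
   Context: $C_\rho$ is called the correlated \emph{and} operator: for events with probabilities $u,v$ and Pearson correlation $\rho$ it gives the probability of their conjunction, clamped to the Fréchet bounds $W$ and $M$. *)

From Stdlib Require Import Reals.
Open Scope R_scope.

Definition W (u v : R) : R := Rmax (u + v - 1) 0.
Definition M (u v : R) : R := Rmin u v.

Definition sd (u v : R) : R := sqrt (u * (1 - u) * v * (1 - v)).

Definition rho_lo (u v : R) : R := (Rmax (u + v - 1) 0 - u * v) / sd u v.
Definition rho_hi (u v : R) : R := (Rmin u v - u * v) / sd u v.

Definition Crho (rho u v : R) : R :=
  if Req_EM_T u 0 then u * v else
  if Req_EM_T u 1 then u * v else
  if Req_EM_T v 0 then u * v else
  if Req_EM_T v 1 then u * v else
  if Rle_dec rho (rho_lo u v) then W u v else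
  if Rle_dec (rho_hi u v) rho then M u v else
  u * v + rho * sd u v.

Definition is_copula (Cf : R -> R -> R) : Prop :=
  (forall v, 0 <= v <= 1 -> Cf 0 v = 0) /\
  (forall u, 0 <= u <= 1 -> Cf u 0 = 0) /\
  (forall u, 0 <= u <= 1 -> Cf u 1 = u) /\
  (forall v, 0 <= v <= 1 -> Cf 1 v = v) /\
  (forall u1 u2 v1 v2, 0 <= u1 -> u1 <= u2 -> u2 <= 1 ->
     0 <= v1 -> v1 <= v2 -> v2 <= 1 ->
     Cf u2 v2 - Cf u2 v1 - Cf u1 v2 + Cf u1 v1 >= 0).

From Stdlib Require Import Reals Lra Psatz.
From Stdlib Require Rminmax.
From Coquelicot Require Import Rcomplements.
Open Scope R_scope.

(* For u, v in (0,1), C_rho is uv + rho sqrt(u(1-u)v(1-v)) clamped between W and M.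
   Replacing u by 1 - u turns C_rho into v - C_{-rho}(1-u, v) and reverses the
   u-interval of a rectangle, so it suffices to treat 0 <= rho = r <= 1, where
   C_r = min(M, uv + r sqrt(u(1-u)v(1-v))).  In the coordinates u = x^2/(1+x^2),
   v = y^2/(1+y^2) this becomes (x^2 y^2 + min(x^2, y^2, r x y)) / ((1+x^2)(1+y^2)).
   For y1 <= y2 the difference C_r(x, y2) - C_r(x, y1) is, between consecutive
   breakpoints r y_i and y_i / r, a nonnegative multiple of (A x^2 + B x)/(1+x^2)
   plus a constant; such a function is nondecreasing on [s, t] as soon as
   A (s + t) + B (1 - s t) >= 0.  Gluing the pieces gives the rectangle inequality
   away from u = 1 and v = 1; the limit of the difference at infinity handles u = 1,
   and symmetry the rest. *)

Definition nondecreasing_on (f : R -> R) (a b : R) : Prop :=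
  forall s t, a <= s -> s <= t -> t <= b -> f s <= f t.

Lemma nondecreasing_on_trans f a b c :
  nondecreasing_on f a b -> nondecreasing_on f b c -> nondecreasing_on f a c.
Proof.
  intros Hab Hbc s t Has Hst Htc.
  destruct (Rle_dec t b); [apply Hab; lra|].
  destruct (Rle_dec b s); [apply Hbc; lra|].
  apply Rle_trans with (f b); [apply Hab | apply Hbc]; lra.
Qed.

Lemma nondecreasing_on_const f c a b :
  (forall x, a <= x <= b -> f x = c) -> nondecreasing_on f a b.
Proof. intros Hf s t Has Hst Htb. rewrite !Hf by lra. lra. Qed.

Lemma one_plus_sq_pos x : 0 < 1 + x ^ 2.
Proof. nra. Qed.

Definition quad_frac (A B x : R) : R := (A * x ^ 2 + B * x) / (1 + x ^ 2).

Lemma quad_frac_sub A B s t :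
  quad_frac A B t - quad_frac A B s =
  (t - s) * (A * (s + t) + B * (1 - s * t)) / ((1 + s ^ 2) * (1 + t ^ 2)).
Proof.
  pose proof (one_plus_sq_pos s); pose proof (one_plus_sq_pos t).
  unfold quad_frac. field. lra.
Qed.

Lemma nondecreasing_on_quad_frac F c A B E a b : 0 <= c ->
  (forall x, a <= x <= b -> F x = c * quad_frac A B x + E) ->
  (forall s t, a <= s -> s <= t -> t <= b -> 0 <= A * (s + t) + B * (1 - s * t)) ->
  nondecreasing_on F a b.
Proof.
  intros Hc HF Hslope s t Has Hst Htb.
  rewrite !HF by lra.
  assert (0 <= quad_frac A B t - quad_frac A B s).
  { rewrite quad_frac_sub. apply Rdiv_le_0_compat.
    - apply Rmult_le_pos; [lra | apply Hslope; lra].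
    - apply Rmult_lt_0_compat; apply one_plus_sq_pos. }
  nra.
Qed.

Definition of_sqrt_odds (x : R) : R := x ^ 2 / (1 + x ^ 2).
Definition sqrt_odds (u : R) : R := sqrt (u / (1 - u)).

Definition odds_kernel (r x y : R) : R := Rmin (Rmin (x ^ 2) (y ^ 2)) (r * x * y).

Definition Codds (r x y : R) : R :=
  (x ^ 2 * y ^ 2 + odds_kernel r x y) / ((1 + x ^ 2) * (1 + y ^ 2)).

Section OddsRegimes.
Variables (r x y : R).
Hypotheses (Hr : r <= 1) (Hx : 0 <= x) (Hy : 0 <= y).

Lemma Codds_left : x <= r * y -> Codds r x y = quad_frac 1 0 x.
Proof.
  intros Hxy.
  assert (x <= y) by nra.
  assert (Hk : odds_kernel r x y = x ^ 2).
  { unfold odds_kernel. rewrite (Rmin_left (x ^ 2) (y ^ 2)) by nra. apply Rmin_left. nra. }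
  pose proof (one_plus_sq_pos x); pose proof (one_plus_sq_pos y).
  unfold Codds, quad_frac. rewrite Hk. field. lra.
Qed.

Lemma Codds_mid : r * y <= x -> r * x <= y ->
  Codds r x y = / (1 + y ^ 2) * quad_frac (y ^ 2) (r * y) x.
Proof.
  intros Hyx Hxy.
  assert (Hk : odds_kernel r x y = r * x * y).
  { unfold odds_kernel. apply Rmin_right. apply Rmin_glb; nra. }
  pose proof (one_plus_sq_pos x); pose proof (one_plus_sq_pos y).
  unfold Codds, quad_frac. rewrite Hk. field. lra.
Qed.

Lemma Codds_right : y <= r * x -> Codds r x y = of_sqrt_odds y.
Proof.
  intros Hyx.
  assert (y <= x) by nra.
  assert (Hk : odds_kernel r x y = y ^ 2).
  { unfold odds_kernel. rewrite (Rmin_right (x ^ 2) (y ^ 2)) by nra. apply Rmin_left. nra. }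
  pose proof (one_plus_sq_pos x); pose proof (one_plus_sq_pos y).
  unfold Codds, of_sqrt_odds. rewrite Hk. field. lra.
Qed.

End OddsRegimes.

(* In [Codds_gap_A_B], [A] and [B] are the regimes ([Codds_left], [Codds_mid],
   [Codds_right]) of [x] relative to [y2] and to [y1]. *)
Section OddsGap.
Variables (r y1 y2 : R).
Hypotheses (Hr : 0 < r <= 1) (Hy1 : 0 <= y1) (Hy12 : y1 <= y2).

Definition Codds_gap (x : R) : R := Codds r x y2 - Codds r x y1.

Lemma mul_le_iff_le_div x y : r * x <= y <-> x <= y / r.
Proof. rewrite Rmult_comm. apply Rle_div_r. lra. Qed.

Lemma div_le_iff_le_mul x y : y / r <= x <-> y <= r * x.
Proof. rewrite (Rmult_comm r x). apply Rle_div_l. lra. Qed.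

Lemma mul_le_div y : 0 <= y -> r * y <= y / r.
Proof.
  intros Hy. assert (r * r <= 1) by nra.
  apply (mul_le_iff_le_div (r * y) y). nra.
Qed.

Lemma div_le_div : y1 / r <= y2 / r.
Proof. apply (Rle_div_r _ _ r); [lra|]. field_simplify; lra. Qed.

Lemma Codds_gap_left_left : nondecreasing_on Codds_gap 0 (r * y1).
Proof.
  apply nondecreasing_on_const with 0. intros x Hx.
  unfold Codds_gap. rewrite !Codds_left by nra. ring.
Qed.

Lemma Codds_gap_left_mid :
  nondecreasing_on Codds_gap (r * y1) (Rmin (r * y2) (y1 / r)).
Proof.
  apply nondecreasing_on_quad_frac with (/ (1 + y1 ^ 2)) 1 (- r * y1) 0.
  - left. apply Rinv_0_lt_compat, one_plus_sq_pos.
  - intros x [Hx1 Hx2].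
    assert (x <= r * y2) by (eapply Rle_trans; [exact Hx2 | apply Rmin_l]).
    assert (r * x <= y1).
    { apply mul_le_iff_le_div. eapply Rle_trans; [exact Hx2 | apply Rmin_r]. }
    unfold Codds_gap. rewrite Codds_left, Codds_mid by nra.
    pose proof (one_plus_sq_pos x); pose proof (one_plus_sq_pos y1).
    unfold quad_frac. field. lra.
  - intros s t Hs Hst Ht.
    assert (0 <= r * y1) by nra.
    assert (0 <= r * y1 * (s * t)) by (apply Rmult_le_pos; nra).
    lra.
Qed.

Lemma Codds_gap_mid_mid : r * y2 <= y1 / r ->
  nondecreasing_on Codds_gap (r * y2) (y1 / r).
Proof.
  intros Hbr.
  apply nondecreasing_on_quad_frac
    with ((y2 - y1) / ((1 + y1 ^ 2) * (1 + y2 ^ 2))) (y1 + y2) (r * (1 - y1 * y2)) 0.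
  - apply Rdiv_le_0_compat; [lra|].
    apply Rmult_lt_0_compat; apply one_plus_sq_pos.
  - intros x [Hx1 Hx2].
    assert (r * x <= y1) by (apply mul_le_iff_le_div; lra).
    unfold Codds_gap. rewrite !Codds_mid by nra.
    pose proof (one_plus_sq_pos x); pose proof (one_plus_sq_pos y1);
      pose proof (one_plus_sq_pos y2).
    unfold quad_frac. field. lra.
  - intros s t Hs Hst Ht.
    assert (r * t <= y1) by (apply mul_le_iff_le_div; lra).
    assert (0 <= r * y2) by nra.
    (* [r y1 y2 <= y1 s] and [r s t <= y1 s] leave [y1 (t - s) + y2 (s + t) + r + r y1 y2 s t] *)
    assert (y1 * (r * y2) <= y1 * s) by (apply Rmult_le_compat_l; lra).
    assert (s * (r * t) <= s * y1) by (apply Rmult_le_compat_l; nra).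
    assert (0 <= r * (y1 * y2) * (s * t))
      by (apply Rmult_le_pos; apply Rmult_le_pos; nra).
    nra.
Qed.

Lemma Codds_gap_left_right : y1 / r <= r * y2 ->
  nondecreasing_on Codds_gap (y1 / r) (r * y2).
Proof.
  intros Hbr.
  assert (0 <= y1 / r) by (apply Rdiv_le_0_compat; lra).
  apply nondecreasing_on_quad_frac with 1 1 0 (- of_sqrt_odds y1).
  - lra.
  - intros x [Hx1 Hx2].
    assert (y1 <= r * x) by (apply div_le_iff_le_mul; lra).
    unfold Codds_gap. rewrite Codds_left, Codds_right by nra. ring.
  - intros s t Hs Hst Ht. lra.
Qed.

Lemma Codds_gap_mid_right :
  nondecreasing_on Codds_gap (Rmax (r * y2) (y1 / r)) (y2 / r).
Proof.
  apply nondecreasing_on_quad_frac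
    with (/ (1 + y2 ^ 2)) (y2 ^ 2) (r * y2) (- of_sqrt_odds y1).
  - left. apply Rinv_0_lt_compat, one_plus_sq_pos.
  - intros x [Hx1 Hx2].
    assert (r * y2 <= x) by (eapply Rle_trans; [apply Rmax_l | exact Hx1]).
    assert (y1 <= r * x).
    { apply div_le_iff_le_mul. eapply Rle_trans; [apply Rmax_r | exact Hx1]. }
    assert (r * x <= y2) by (apply mul_le_iff_le_div; lra).
    unfold Codds_gap. rewrite Codds_mid, Codds_right by nra. ring.
  - intros s t Hs Hst Ht.
    assert (r * y2 <= s) by (eapply Rle_trans; [apply Rmax_l | exact Hs]).
    assert (r * t <= y2) by (apply mul_le_iff_le_div; lra).
    assert (0 <= r * y2) by nra.
    assert (y2 * s * (r * t) <= y2 * s * y2) by (apply Rmult_le_compat_l; nra).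
    assert (0 <= y2 ^ 2 * t) by nra.
    lra.
Qed.

Lemma Codds_gap_right_right x : y2 / r <= x ->
  Codds_gap x = of_sqrt_odds y2 - of_sqrt_odds y1.
Proof.
  intros Hx.
  pose proof div_le_div.
  assert (0 <= y1 / r) by (apply Rdiv_le_0_compat; lra).
  assert (y2 <= r * x) by (apply div_le_iff_le_mul; lra).
  unfold Codds_gap. rewrite !Codds_right by nra. reflexivity.
Qed.

Lemma Codds_gap_nondecreasing b : y2 / r <= b -> nondecreasing_on Codds_gap 0 b.
Proof.
  intros Hb.
  pose proof (mul_le_div y1 Hy1); pose proof (mul_le_div y2 ltac:(lra));
    pose proof div_le_div.
  apply nondecreasing_on_trans with (r * y1); [apply Codds_gap_left_left|].
  apply nondecreasing_on_trans with (Rmin (r * y2) (y1 / r));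
    [apply Codds_gap_left_mid|].
  apply nondecreasing_on_trans with (Rmax (r * y2) (y1 / r)).
  - destruct (Rle_dec (r * y2) (y1 / r)).
    + rewrite Rmin_left, Rmax_right by lra. apply Codds_gap_mid_mid; lra.
    + rewrite Rmin_right, Rmax_left by lra. apply Codds_gap_left_right; lra.
  - apply nondecreasing_on_trans with (y2 / r); [apply Codds_gap_mid_right|].
    apply nondecreasing_on_const with (of_sqrt_odds y2 - of_sqrt_odds y1).
    intros x Hx. apply Codds_gap_right_right; lra.
Qed.

Lemma Codds_gap_le_compat s t : 0 <= s -> s <= t -> Codds_gap s <= Codds_gap t.
Proof.
  intros Hs Hst.
  apply (Codds_gap_nondecreasing (Rmax t (y2 / r)));
    [apply Rmax_r | lra | lra | apply Rmax_l].
Qed.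

Lemma Codds_gap_le_limit s : 0 <= s -> Codds_gap s <= of_sqrt_odds y2 - of_sqrt_odds y1.
Proof.
  intros Hs.
  rewrite <- (Codds_gap_right_right (Rmax s (y2 / r))) by apply Rmax_r.
  apply Codds_gap_le_compat; [lra | apply Rmax_l].
Qed.

End OddsGap.

Lemma of_sqrt_oddsK u : 0 <= u < 1 -> of_sqrt_odds (sqrt_odds u) = u.
Proof.
  intros Hu. unfold of_sqrt_odds, sqrt_odds.
  rewrite pow2_sqrt by (apply Rdiv_le_0_compat; lra).
  field. lra.
Qed.

Lemma sqrt_odds_le u1 u2 : 0 <= u1 -> u1 <= u2 -> u2 < 1 -> sqrt_odds u1 <= sqrt_odds u2.
Proof.
  intros Hu1 Hu12 Hu2. unfold sqrt_odds. apply sqrt_le_1_alt.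
  assert (0 <= (u2 - u1) / ((1 - u1) * (1 - u2))) by (apply Rdiv_le_0_compat; nra).
  replace (u2 / (1 - u2)) with (u1 / (1 - u1) + (u2 - u1) / ((1 - u1) * (1 - u2)))
    by (field; lra).
  lra.
Qed.

Lemma W_le_mul u v : 0 <= u <= 1 -> 0 <= v <= 1 -> W u v <= u * v.
Proof. intros. unfold W. apply Rmax_lub; nra. Qed.

Lemma mul_le_M u v : 0 <= u <= 1 -> 0 <= v <= 1 -> u * v <= M u v.
Proof. intros. unfold M. apply Rmin_glb; nra. Qed.

Lemma W_le_M u v : 0 <= u <= 1 -> 0 <= v <= 1 -> W u v <= M u v.
Proof. intros. apply Rle_trans with (u * v); [apply W_le_mul | apply mul_le_M]; assumption. Qed.

Definition Cnonneg (r u v : R) : R := Rmin (M u v) (u * v + r * sd u v).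

Lemma Cnonneg_sym r u v : Cnonneg r u v = Cnonneg r v u.
Proof.
  unfold Cnonneg, M, sd. rewrite (Rmin_comm v u), (Rmult_comm v u).
  replace (v * (1 - v) * u * (1 - u)) with (u * (1 - u) * v * (1 - v)) by ring.
  reflexivity.
Qed.

Lemma Cnonneg_0 u v : 0 <= u <= 1 -> 0 <= v <= 1 -> Cnonneg 0 u v = u * v.
Proof.
  intros. unfold Cnonneg. rewrite Rmult_0_l, Rplus_0_r.
  apply Rmin_right, mul_le_M; assumption.
Qed.

Lemma Rmin_le_sqrt_mul a b : 0 <= a -> 0 <= b -> Rmin a b <= sqrt (a * b).
Proof.
  intros Ha Hb.
  assert (0 <= Rmin a b) by (apply Rmin_glb; assumption).
  pose proof (Rmin_l a b); pose proof (Rmin_r a b).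
  rewrite <- (sqrt_pow2 (Rmin a b)) by assumption.
  apply sqrt_le_1_alt. nra.
Qed.

Lemma Cnonneg_1 u v : 0 <= u <= 1 -> 0 <= v <= 1 -> Cnonneg 1 u v = M u v.
Proof.
  intros Hu Hv. unfold Cnonneg. apply Rmin_left. rewrite Rmult_1_l.
  (* [M - uv = min (u (1 - v)) (v (1 - u))] is at most the geometric mean [sd] *)
  assert (M u v - u * v <= sd u v).
  { unfold M, sd.
    replace (Rmin u v - u * v) with (Rmin (u * (1 - v)) (v * (1 - u))).
    - replace (u * (1 - u) * v * (1 - v)) with (u * (1 - v) * (v * (1 - u))) by ring.
      apply Rmin_le_sqrt_mul; nra.
    - rewrite <- Rminmax.R.minus_min_distr_r. f_equal; ring. }
  lra.
Qed.

Lemma sd_edge u v : u = 0 \/ u = 1 \/ v = 0 \/ v = 1 -> sd u v = 0.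
Proof.
  intros He. unfold sd. rewrite <- sqrt_0. f_equal.
  destruct He as [-> | [-> | [-> | ->]]]; ring.
Qed.

Lemma Cnonneg_1l r v : 0 <= v <= 1 -> Cnonneg r 1 v = v.
Proof.
  intros Hv. unfold Cnonneg, M.
  rewrite sd_edge by (right; left; reflexivity).
  rewrite Rmult_0_r, Rplus_0_r, Rmult_1_l, (Rmin_right 1 v) by lra.
  apply Rmin_left. lra.
Qed.

Lemma W_le_Cnonneg r u v : 0 <= r -> 0 <= u <= 1 -> 0 <= v <= 1 -> W u v <= Cnonneg r u v.
Proof.
  intros Hr Hu Hv. pose proof (W_le_mul u v Hu Hv); pose proof (mul_le_M u v Hu Hv).
  assert (0 <= r * sd u v) by (apply Rmult_le_pos; [lra | apply sqrt_pos]).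
  apply Rmin_glb; lra.
Qed.

Lemma Cnonneg_of_sqrt_odds r x y : 0 <= x -> 0 <= y ->
  Cnonneg r (of_sqrt_odds x) (of_sqrt_odds y) = Codds r x y.
Proof.
  intros Hx Hy.
  pose proof (one_plus_sq_pos x); pose proof (one_plus_sq_pos y).
  set (D := (1 + x ^ 2) * (1 + y ^ 2)).
  assert (HD : 0 < D) by (apply Rmult_lt_0_compat; assumption).
  assert (Hsd : sd (of_sqrt_odds x) (of_sqrt_odds y) = x * y / D).
  { unfold sd, of_sqrt_odds.
    rewrite <- (sqrt_pow2 (x * y / D)) by (apply Rdiv_le_0_compat; nra).
    f_equal. unfold D. field. lra. }
  unfold Cnonneg, M, Codds, odds_kernel. fold D. rewrite Hsd.
  rewrite <- !Rminmax.R.plus_min_distr_l. unfold Rdiv.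
  rewrite !Rmult_min_distr_r by (left; apply Rinv_0_lt_compat; exact HD).
  unfold of_sqrt_odds, D. f_equal; [f_equal|]; field; lra.
Qed.

Lemma Cnonneg_sqrt_odds r u v : 0 <= u < 1 -> 0 <= v < 1 ->
  Cnonneg r u v = Codds r (sqrt_odds u) (sqrt_odds v).
Proof.
  intros Hu Hv.
  rewrite <- Cnonneg_of_sqrt_odds by apply sqrt_pos.
  rewrite !of_sqrt_oddsK by assumption. reflexivity.
Qed.

Definition volume (C : R -> R -> R) (u1 u2 v1 v2 : R) : R :=
  C u2 v2 - C u2 v1 - C u1 v2 + C u1 v1.

Lemma volume_Cnonneg_nonneg_v_lt1 r u1 u2 v1 v2 : 0 < r <= 1 ->
  0 <= u1 -> u1 <= u2 -> u2 <= 1 -> 0 <= v1 -> v1 <= v2 -> v2 < 1 ->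
  0 <= volume (Cnonneg r) u1 u2 v1 v2.
Proof.
  intros Hr Hu1 Hu12 Hu2 Hv1 Hv12 Hv2. unfold volume.
  pose proof (sqrt_odds_le v1 v2 Hv1 Hv12 Hv2).
  destruct (Rlt_le_dec u2 1) as [Hu2' | Hu2'].
  - rewrite !Cnonneg_sqrt_odds by lra.
    pose proof (Codds_gap_le_compat r (sqrt_odds v1) (sqrt_odds v2) ltac:(lra) (sqrt_pos _)
      ltac:(assumption) (sqrt_odds u1) (sqrt_odds u2) (sqrt_pos _)
      (sqrt_odds_le u1 u2 Hu1 Hu12 Hu2')).
    unfold Codds_gap in *. lra.
  - replace u2 with 1 by lra. rewrite !Cnonneg_1l by lra.
    destruct (Rlt_le_dec u1 1) as [Hu1' | Hu1'].
    + rewrite !Cnonneg_sqrt_odds by lra.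
      pose proof (Codds_gap_le_limit r (sqrt_odds v1) (sqrt_odds v2) ltac:(lra)
        (sqrt_pos _) ltac:(assumption) (sqrt_odds u1) (sqrt_pos _)).
      unfold Codds_gap in *. rewrite !of_sqrt_oddsK in * by lra. lra.
    + replace u1 with 1 by lra. rewrite !Cnonneg_1l by lra. lra.
Qed.

Lemma volume_Cnonneg_nonneg r u1 u2 v1 v2 : 0 <= r <= 1 ->
  0 <= u1 -> u1 <= u2 -> u2 <= 1 -> 0 <= v1 -> v1 <= v2 -> v2 <= 1 ->
  0 <= volume (Cnonneg r) u1 u2 v1 v2.
Proof.
  intros Hr Hu1 Hu12 Hu2 Hv1 Hv12 Hv2.
  destruct (Req_dec r 0) as [-> | Hr0].
  - unfold volume. rewrite !Cnonneg_0 by lra. nra.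
  - destruct (Rlt_le_dec v2 1).
    { apply volume_Cnonneg_nonneg_v_lt1; lra. }
    destruct (Rlt_le_dec u2 1).
    + replace (volume (Cnonneg r) u1 u2 v1 v2) with (volume (Cnonneg r) v1 v2 u1 u2)
        by (unfold volume; rewrite !(Cnonneg_sym r v1), !(Cnonneg_sym r v2); ring).
      apply volume_Cnonneg_nonneg_v_lt1; lra.
    + replace u2 with 1 by lra. replace v2 with 1 by lra. unfold volume.
      rewrite (Cnonneg_sym r u1 1), !Cnonneg_1l by lra.
      pose proof (W_le_Cnonneg r u1 v1 ltac:(lra) ltac:(lra) ltac:(lra)).
      pose proof (Rmax_l (u1 + v1 - 1) 0). unfold W in *. lra.
Qed.

Lemma sd_pos u v : 0 < u < 1 -> 0 < v < 1 -> 0 < sd u v.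
Proof.
  intros. unfold sd. apply sqrt_lt_R0.
  repeat apply Rmult_lt_0_compat; lra.
Qed.

Lemma clamp_id lo hi p : lo <= p <= hi -> Rmax lo (Rmin hi p) = p.
Proof. intros Hp. rewrite Rmin_right by lra. apply Rmax_right. lra. Qed.

Lemma Crho_edge rho u v : u = 0 \/ u = 1 \/ v = 0 \/ v = 1 -> Crho rho u v = u * v.
Proof.
  intros He. unfold Crho.
  destruct (Req_EM_T u 0); [reflexivity|]. destruct (Req_EM_T u 1); [reflexivity|].
  destruct (Req_EM_T v 0); [reflexivity|]. destruct (Req_EM_T v 1); [reflexivity|].
  tauto.
Qed.

Lemma Crho_interior rho u v : 0 < u < 1 -> 0 < v < 1 ->
  Crho rho u v = Rmax (W u v) (Rmin (M u v) (u * v + rho * sd u v)).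
Proof.
  intros Hu Hv. pose proof (sd_pos u v Hu Hv) as Hsd.
  assert (HWM : W u v <= M u v) by (apply W_le_M; lra).
  unfold Crho.
  destruct (Req_EM_T u 0); [lra|]. destruct (Req_EM_T u 1); [lra|].
  destruct (Req_EM_T v 0); [lra|]. destruct (Req_EM_T v 1); [lra|].
  unfold rho_lo, rho_hi. fold (W u v). fold (M u v).
  destruct (Rle_dec rho ((W u v - u * v) / sd u v)) as [Hlo | Hlo].
  - apply (Rle_div_r _ _ (sd u v)) in Hlo; [|lra].
    symmetry. apply Rmax_left.
    apply Rle_trans with (u * v + rho * sd u v); [apply Rmin_r | lra].
  - apply Rnot_le_lt, (Rlt_div_l _ _ (sd u v)) in Hlo; [|lra].
    destruct (Rle_dec ((M u v - u * v) / sd u v) rho) as [Hhi | Hhi].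
    + apply (Rle_div_l _ _ (sd u v)) in Hhi; [|lra].
      rewrite (Rmin_left (M u v)) by lra. symmetry. apply Rmax_right. lra.
    + apply Rnot_le_lt, (Rlt_div_r _ _ (sd u v)) in Hhi; [|lra].
      symmetry. apply clamp_id. lra.
Qed.

Lemma Crho_clamp rho u v : 0 <= u <= 1 -> 0 <= v <= 1 ->
  Crho rho u v = Rmax (W u v) (Rmin (M u v) (u * v + rho * sd u v)).
Proof.
  intros Hu Hv.
  assert (Hedge : u = 0 \/ u = 1 \/ v = 0 \/ v = 1 ->
            Crho rho u v = Rmax (W u v) (Rmin (M u v) (u * v + rho * sd u v))).
  { intros He. rewrite Crho_edge, sd_edge by exact He. rewrite Rmult_0_r, Rplus_0_r.
    symmetry. apply clamp_id. split; [apply W_le_mul | apply mul_le_M]; assumption. }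
  destruct (Req_dec u 0); [apply Hedge; tauto|].
  destruct (Req_dec u 1); [apply Hedge; tauto|].
  destruct (Req_dec v 0); [apply Hedge; tauto|].
  destruct (Req_dec v 1); [apply Hedge; tauto|].
  apply Crho_interior; lra.
Qed.

Lemma W_reflect u v : W (1 - u) v = v - M u v.
Proof.
  unfold W, M. rewrite <- Rminmax.R.minus_max_distr_l. f_equal; ring.
Qed.

Lemma M_reflect u v : M (1 - u) v = v - W u v.
Proof.
  unfold W, M. rewrite <- Rminmax.R.minus_min_distr_l. f_equal; ring.
Qed.

Lemma sd_reflect u v : sd (1 - u) v = sd u v.
Proof. unfold sd. f_equal. ring. Qed.

Lemma clamp_reflect lo hi p c : lo <= hi ->
  Rmax lo (Rmin hi p) = c - Rmax (c - hi) (Rmin (c - lo) (c - p)).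
Proof.
  intros Hlh. unfold Rmax, Rmin.
  repeat destruct Rle_dec; lra.
Qed.

Lemma Crho_reflect rho u v : 0 <= u <= 1 -> 0 <= v <= 1 ->
  Crho rho u v = v - Crho (- rho) (1 - u) v.
Proof.
  intros Hu Hv.
  rewrite !Crho_clamp by lra. rewrite W_reflect, M_reflect, sd_reflect.
  replace ((1 - u) * v + - rho * sd u v) with (v - (u * v + rho * sd u v)) by ring.
  apply clamp_reflect, W_le_M; assumption.
Qed.

Lemma Crho_nonneg rho u v : 0 <= rho -> 0 <= u <= 1 -> 0 <= v <= 1 ->
  Crho rho u v = Cnonneg rho u v.
Proof.
  intros Hrho Hu Hv. rewrite Crho_clamp by assumption.
  apply Rmax_right, W_le_Cnonneg; assumption.
Qed.

Lemma volume_Crho_nonneg rho u1 u2 v1 v2 : -1 <= rho <= 1 ->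
  0 <= u1 -> u1 <= u2 -> u2 <= 1 -> 0 <= v1 -> v1 <= v2 -> v2 <= 1 ->
  0 <= volume (Crho rho) u1 u2 v1 v2.
Proof.
  intros Hrho Hu1 Hu12 Hu2 Hv1 Hv12 Hv2.
  destruct (Rle_dec 0 rho).
  - unfold volume. rewrite !Crho_nonneg by lra.
    apply volume_Cnonneg_nonneg; lra.
  - replace (volume (Crho rho) u1 u2 v1 v2)
      with (volume (Cnonneg (- rho)) (1 - u2) (1 - u1) v1 v2).
    + apply volume_Cnonneg_nonneg; lra.
    + unfold volume. rewrite !(Crho_reflect rho), !Crho_nonneg by lra. ring.
Qed.

Theorem mainTheorem2 :
  (forall rho : R, -1 <= rho <= 1 -> is_copula (Crho rho)) /\
  (forall u v : R, 0 <= u <= 1 -> 0 <= v <= 1 ->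
     Crho (-1) u v = W u v /\ Crho 0 u v = u * v /\ Crho 1 u v = M u v).
Proof.
  split.
  - intros rho Hrho.
    repeat split; intros.
    1-4: rewrite Crho_edge by tauto; ring.
    apply Rle_ge, volume_Crho_nonneg; assumption.
  - intros u v Hu Hv. repeat split.
    + rewrite Crho_reflect, Crho_nonneg by lra. replace (- -1) with 1 by ring.
      rewrite Cnonneg_1, M_reflect by lra. ring.
    + rewrite Crho_nonneg, Cnonneg_0 by lra. reflexivity.
    + rewrite Crho_nonneg, Cnonneg_1 by lra. reflexivity.
Qed.
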